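(* For an $E$-linear code $C$ of length $2n$, $$(SHull(C))_{Res}\subseteq SHull(C_{Res})\quad\text{and}\quad (SHull(C))_{Tor}\supseteq SHull(C_{Tor}).$$ Moreover, both inclusions are equalities if $C$ is free.
   Context: $E=\langle \kappa,\tau \mid 2\kappa=2\tau=0,\ \kappa^2=\kappa,\ \tau^2=\tau,\ \kappa\tau=\kappa,\ \tau\kappa=\tau\rangle$ is the non-unital ring $\{0,\kappa,\tau,\zeta\}$, $\zeta=\kappa+\tau$, with $e\kappa=e\tau=e$, $e\zeta=0$ for all $e\in E$. Every $e\in E$ is uniquely $u\kappa+v\zeta$ ($u,v\in\mathbb{F}_2$); $\pi(u\kappa+v\zeta)=u$, componentwise. An $E$-linear code of length $2n$ is a left $E$-submodule $C\subseteq E^{2n}$; $C_{Res}=\pi(C)$, $C_{Tor}=\{v\in\mathbb{F}_2^{2n}:\zeta v\in C\}$ (componentwise, $0\cdot\zeta=0,1\cdot\zeta=\zeta$); $C$ is free if $C_{Res}=C_{Tor}$. Symplectic inner product (over $E$ or $\mathbb{F}_2$): $\langle (u|v),(u'|v')\rangle_s=\sum_i u_iv'_i+\sum_i v_iu'_i$. For binary $B$: $B^{\perp_S}=\{z:\langle z,w\rangle_s=0\ \forall w\in B\}$, $SHull(B)=B\cap B^{\perp_S}$. For $E$-linear $C$: $C^{\perp_S}=\{z\in E^{2n}:\langle z,w\rangle_s=\langle w,z\rangle_s=0\ \forall w\in C\}$ and $SHull(C)=C\cap C^{\perp_S}$. *)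

From HB Require Import structures.
From mathcomp Require Import all_boot all_order.
Set Implicit Arguments. Unset Strict Implicit. Unset Printing Implicit Defensive.

(* The non-unital ring E = {0, kappa, tau, zeta}, zeta = kappa + tau. *)
Inductive E := E0 | Ekappa | Etau | Ezeta.

Definition E_enc (e : E) : bool * bool :=
  match e with E0 => (false, false) | Ekappa => (true, false)
             | Etau => (false, true) | Ezeta => (true, true) end.
Definition E_dec (p : bool * bool) : E :=
  match p with (false, false) => E0 | (true, false) => Ekappa
             | (false, true) => Etau | (true, true) => Ezeta end.
Lemma E_encK : cancel E_enc E_dec. Proof. by case. Qed.
HB.instance Definition _ := Equality.copy E (can_type E_encK).
HB.instance Definition _ := Choice.copy E (can_type E_encK).
HB.instance Definition _ := Countable.copy E (can_type E_encK).
HB.instance Definition _ := Finite.copy E (can_type E_encK).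

Definition addE (x y : E) : E :=
  match x, y with
  | E0, z | z, E0 => z
  | Ekappa, Ekappa | Etau, Etau | Ezeta, Ezeta => E0
  | Ekappa, Etau | Etau, Ekappa => Ezeta
  | Ekappa, Ezeta | Ezeta, Ekappa => Etau
  | Etau, Ezeta | Ezeta, Etau => Ekappa
  end.

Definition mulE (x y : E) : E :=
  match y with Ekappa | Etau => x | _ => E0 end.

(* pi (u kappa + v zeta) = u *)
Definition piE (e : E) : bool :=
  match e with Ekappa | Etau => true | _ => false end.

Definition zetaE (b : bool) : E := if b then Ezeta else E0.

(* Words of length 2n: index i < n is the u-part, n + i the v-part. *)
Definition Eword n := {ffun 'I_(n + n) -> E}.
Definition Bword n := {ffun 'I_(n + n) -> bool}.  (* F_2 = bool, + = xor, * = && *)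

Definition addw n (x y : Eword n) : Eword n := [ffun i => addE (x i) (y i)].
Definition scalew n (e : E) (x : Eword n) : Eword n := [ffun i => mulE e (x i)].
Definition zerow n : Eword n := [ffun => E0].

Definition Elinear n (C : {set Eword n}) : Prop :=
  [/\ zerow n \in C,
      (forall x y, x \in C -> y \in C -> addw x y \in C) &
      (forall e x, x \in C -> scalew e x \in C)].

Definition Res n (C : {set Eword n}) : {set Bword n} :=
  [set ([ffun i => piE (c i)] : Bword n) | c : Eword n in C].
Definition Tor n (C : {set Eword n}) : {set Bword n} :=
  [set v : Bword n | [ffun i => zetaE (v i)] \in C].
Definition free n (C : {set Eword n}) : Prop := Res C = Tor C.

Definition sympE n (x y : Eword n) : E :=
  addE (\big[addE/E0]_(i < n) mulE (x (lshift n i)) (y (rshift n i)))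
       (\big[addE/E0]_(i < n) mulE (x (rshift n i)) (y (lshift n i))).
Definition sympB n (x y : Bword n) : bool :=
  addb (\big[addb/false]_(i < n) (x (lshift n i) && y (rshift n i)))
       (\big[addb/false]_(i < n) (x (rshift n i) && y (lshift n i))).

Definition perpB n (B : {set Bword n}) : {set Bword n} :=
  [set z | [forall w in B, ~~ sympB z w]].
Definition SHullB n (B : {set Bword n}) : {set Bword n} := B :&: perpB B.

Definition perpE n (C : {set Eword n}) : {set Eword n} :=
  [set z | [forall w in C, (sympE z w == E0) && (sympE w z == E0)]].
Definition SHullE n (C : {set Eword n}) : {set Eword n} := C :&: perpE C.

(** Writing [e = u kappa + v zeta], both coordinates are additive and
    [pi (e f) = pi e pi f], [v (e f) = v e pi f].  Hence the symplectic
    product of two [E]-words vanishes iff the binary products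
    [<pi x, pi y>] and [<v x, pi y>] both vanish.  For a linear code,
    [zeta c = zeta pi(c)] and [c + kappa c = zeta v(c)] put [pi(c)] and
    [v(c)] in [C_Tor], while [kappa c] is a codeword with [pi(kappa c) = pi(c)]
    and [v(kappa c) = 0]; these three facts yield the inclusions, and freeness
    ([C_Res = C_Tor]) closes the gaps. *)

From mathcomp Require Import all_boot all_order.
(* Imported after mathcomp so that [piE] is not shadowed by generic_quotient's notation. *)
Set Implicit Arguments. Unset Strict Implicit. Unset Printing Implicit Defensive.

(* [piE] reads off the coordinate [u] of [e = u kappa + v zeta], [zcoordE] the coordinate [v]. *)
Definition zcoordE (e : E) : bool :=
  match e with Etau | Ezeta => true | _ => false end.

Definition resw n (x : Eword n) : Bword n := [ffun i => piE (x i)].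
Definition zcoordw n (x : Eword n) : Bword n := [ffun i => zcoordE (x i)].
Definition zetaw n (v : Bword n) : Eword n := [ffun i => zetaE (v i)].

Lemma piE_add a b : piE (addE a b) = piE a (+) piE b.
Proof. by case: a; case: b. Qed.

Lemma zcoordE_add a b : zcoordE (addE a b) = zcoordE a (+) zcoordE b.
Proof. by case: a; case: b. Qed.

Lemma piE_mul a b : piE (mulE a b) = piE a && piE b.
Proof. by case: a; case: b. Qed.

Lemma zcoordE_mul a b : zcoordE (mulE a b) = zcoordE a && piE b.
Proof. by case: a; case: b. Qed.

Lemma E_eq0 e : (e == E0) = ~~ piE e && ~~ zcoordE e.
Proof. by case: e. Qed.

Lemma piE_sympE n (x y : Eword n) : piE (sympE x y) = sympB (resw x) (resw y).
Proof.
rewrite /sympE /sympB piE_add !(big_morph piE piE_add (erefl : piE E0 = false)).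
by congr (_ (+) _); apply: eq_bigr => i _; rewrite piE_mul !ffunE.
Qed.

Lemma zcoordE_sympE n (x y : Eword n) :
  zcoordE (sympE x y) = sympB (zcoordw x) (resw y).
Proof.
rewrite /sympE /sympB zcoordE_add.
rewrite !(big_morph zcoordE zcoordE_add (erefl : zcoordE E0 = false)).
by congr (_ (+) _); apply: eq_bigr => i _; rewrite zcoordE_mul !ffunE.
Qed.

Lemma sympE_eq0 n (x y : Eword n) :
  (sympE x y == E0) = ~~ sympB (resw x) (resw y) && ~~ sympB (zcoordw x) (resw y).
Proof. by rewrite E_eq0 piE_sympE zcoordE_sympE. Qed.

Lemma sympBC n (a b : Bword n) : sympB a b = sympB b a.
Proof. by rewrite /sympB addbC; congr (_ (+) _); apply: eq_bigr => i _; apply: andbC. Qed.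

Lemma sympB0l n (b : Bword n) : sympB [ffun => false] b = false.
Proof. by rewrite /sympB !big1 // => i _; rewrite ffunE. Qed.

Lemma sympB0r n (b : Bword n) : sympB b [ffun => false] = false.
Proof. by rewrite sympBC sympB0l. Qed.

Lemma resw_zetaw n (v : Bword n) : resw (zetaw v) = [ffun => false].
Proof. by apply/ffunP => i; rewrite !ffunE; case: (v i). Qed.

Lemma zcoordw_zetaw n (v : Bword n) : zcoordw (zetaw v) = v.
Proof. by apply/ffunP => i; rewrite !ffunE; case: (v i). Qed.

Lemma resw_kappa n (x : Eword n) : resw (scalew Ekappa x) = resw x.
Proof. by apply/ffunP => i; rewrite !ffunE; case: (x i). Qed.

Lemma zcoordw_kappa n (x : Eword n) : zcoordw (scalew Ekappa x) = [ffun => false].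
Proof. by apply/ffunP => i; rewrite !ffunE; case: (x i). Qed.

Lemma zetaw_resw n (x : Eword n) : zetaw (resw x) = scalew Ezeta x.
Proof. by apply/ffunP => i; rewrite !ffunE; case: (x i). Qed.

Lemma zetaw_zcoordw n (x : Eword n) : zetaw (zcoordw x) = addw x (scalew Ekappa x).
Proof. by apply/ffunP => i; rewrite !ffunE; case: (x i). Qed.

Lemma sympE_zetaw_l n (v : Bword n) (x : Eword n) :
  (sympE (zetaw v) x == E0) = ~~ sympB v (resw x).
Proof. by rewrite sympE_eq0 resw_zetaw zcoordw_zetaw sympB0l. Qed.

Lemma sympE_zetaw_r n (x : Eword n) (v : Bword n) : sympE x (zetaw v) = E0.
Proof. by apply/eqP; rewrite sympE_eq0 resw_zetaw !sympB0r. Qed.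

Lemma subset_perpB n (A B : {set Bword n}) : A \subset B -> perpB B \subset perpB A.
Proof.
move=> /subsetP AB; apply/subsetP => z; rewrite !inE => /forall_inP zB.
by apply/forall_inP => w /AB; apply: zB.
Qed.

Lemma perpB_Res n (C : {set Eword n}) (u : Bword n) :
  (u \in perpB (Res C)) = [forall w in C, ~~ sympB u (resw w)].
Proof.
rewrite inE; apply/forall_inP/forall_inP => [uP w wC | uP _ /imsetP [w wC ->]].
  by apply: uP; apply: imset_f.
exact: uP.
Qed.

Lemma Res_SHullE_sub n (C : {set Eword n}) : Res (SHullE C) \subset SHullB (Res C).
Proof.
apply/subsetP => u /imsetP [c /setIP [cC] + ->]; rewrite inE => /forall_inP cP.
rewrite -/(resw c) in_setI (imset_f _ cC) perpB_Res.
apply/forall_inP => w /cP /andP [/eqP cw _].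
by rewrite -piE_sympE cw.
Qed.

Lemma Tor_SHullE n (C : {set Eword n}) : Tor (SHullE C) = Tor C :&: perpB (Res C).
Proof.
apply/setP => v; rewrite in_setI perpB_Res !inE -/(zetaw v).
congr (_ && _); apply: eq_forallb_in => w _.
by rewrite sympE_zetaw_l sympE_zetaw_r eqxx andbT.
Qed.

Section LinearCode.

Variables (n : nat) (C : {set Eword n}).
Hypothesis linC : Elinear C.

Lemma Res_sub_Tor : Res C \subset Tor C.
Proof.
case: linC => _ _ scaleC; apply/subsetP => _ /imsetP [w wC ->].
by rewrite inE -/(resw w) -/(zetaw _) zetaw_resw scaleC.
Qed.

Lemma zcoordw_Tor w : w \in C -> zcoordw w \in Tor C.
Proof.
case: linC => _ addC scaleC wC.
by rewrite inE -/(zetaw _) zetaw_zcoordw addC ?scaleC.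
Qed.

Lemma Res_perpB_Tor_sub : Res C :&: perpB (Tor C) \subset Res (SHullE C).
Proof.
apply/subsetP => u /setIP [/imsetP [w wC ->]]; rewrite -/(resw w) inE => /forall_inP uTor.
have kwC : scalew Ekappa w \in C by case: linC => _ _; apply.
rewrite -resw_kappa; apply: imset_f; rewrite in_setI kwC inE.
apply/forall_inP => x xC; rewrite !sympE_eq0 resw_kappa zcoordw_kappa.
rewrite sympB0l andbT [sympB (resw x) _]sympBC [sympB (zcoordw x) _]sympBC.
have xResTor : resw x \in Tor C by rewrite (subsetP Res_sub_Tor) ?imset_f.
by rewrite !uTor ?zcoordw_Tor.
Qed.

Lemma SHullB_Tor_sub : SHullB (Tor C) \subset Tor (SHullE C).
Proof. by rewrite Tor_SHullE setIS // subset_perpB // Res_sub_Tor. Qed.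

End LinearCode.

Theorem mainTheorem8 (n : nat) (C : {set Eword n}) :
  Elinear C ->
  [/\ Res (SHullE C) \subset SHullB (Res C),
      SHullB (Tor C) \subset Tor (SHullE C) &
      (free C -> Res (SHullE C) = SHullB (Res C) /\
                 Tor (SHullE C) = SHullB (Tor C))].
Proof.
move=> linC; split; [exact: Res_SHullE_sub | exact: SHullB_Tor_sub | move=> freeC].
split; last by rewrite Tor_SHullE /SHullB freeC.
apply/eqP; rewrite eqEsubset Res_SHullE_sub /SHullB {2}freeC.
exact: Res_perpB_Tor_sub.
Qed.
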